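(* Let $(a_i)_{i=1}^n$ be a strictly V-shaped finite real sequence ($n\ge2$) and let $\alpha<\beta$ be real numbers. Then there exists a subdivision $\alpha=t_1<t_2<\dots<t_n=\beta$ of $[\alpha,\beta]$ such that $(t_i)_{i=1}^n\in T_a$.
   Context: For a real sequence $(x_i)$, $\Delta x_i=x_{i+1}-x_i$. ''Increasing'' means strictly increasing. For a real sequence $a=(a_i)_{i=1}^n$, $T_a$ denotes the set of increasing real sequences $(t_i)_{i=1}^n$ such that $(\Delta a_i/\Delta t_i)_{i=1}^{n-1}$ is non-decreasing. A sequence is strictly V-shaped if there are indices $1\le m\le M\le n$ such that $a_1>a_2>\dots>a_m=a_{m+1}=\dots=a_M<a_{M+1}<\dots<a_n$ (i.e. it is strictly monotonic, or strictly decreasing then constant, or constant then strictly increasing, or strictly decreasing then strictly increasing, or strictly decreasing then constant then strictly increasing). *)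

(* concrete reals R. Finite sequences (x_i)_{i=1}^n are
   modelled as functions nat -> R of which only indices 1..n matter. *)
From Stdlib Require Import Reals.
Open Scope R_scope.

Definition Delta (x : nat -> R) (i : nat) : R := x (S i) - x i.

Definition increasing_seq (n : nat) (t : nat -> R) : Prop :=
  forall i : nat, (1 <= i)%nat -> (i < n)%nat -> t i < t (S i).

Definition in_T (n : nat) (a t : nat -> R) : Prop :=
  increasing_seq n t /\
  forall i : nat, (1 <= i)%nat -> (S i < n)%nat ->
    Delta a i / Delta t i <= Delta a (S i) / Delta t (S i).

Definition strictly_V_shaped (n : nat) (a : nat -> R) : Prop :=
  exists m M : nat, (1 <= m)%nat /\ (m <= M)%nat /\ (M <= n)%nat /\
    (forall i, (1 <= i)%nat -> (i < m)%nat -> a i > a (S i)) /\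
    (forall i, (m <= i)%nat -> (i < M)%nat -> a i = a (S i)) /\
    (forall i, (M <= i)%nat -> (i < n)%nat -> a i < a (S i)).

(* Choose the spacings of the subdivision proportional to the
   jumps of a: Delta t_i = c * w_i, where the weight w_i is |Delta a_i| (or 1
   when Delta a_i = 0) and c > 0 is fixed by the requirement t_n = beta.
   Then Delta a_i / Delta t_i = sign(Delta a_i) / c, and for a strictly
   V-shaped sequence the signs run -1, ..., -1, 0, ..., 0, 1, ..., 1, hence
   are non-decreasing. *)
From Pilot Require Import Defs.
From Stdlib Require Import Reals Lra Lia.
Open Scope R_scope.

Definition weight (a : nat -> R) (i : nat) : R :=
  if Req_EM_T (Defs.Delta a i) 0 then 1 else Rabs (Defs.Delta a i).

Lemma weight_pos (a : nat -> R) (i : nat) : 0 < weight a i.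
Proof.
  unfold weight; destruct (Req_EM_T (Defs.Delta a i) 0); [lra|].
  now apply Rabs_pos_lt.
Qed.

Definition unit_slope (a : nat -> R) (i : nat) : R := Defs.Delta a i / weight a i.

Lemma unit_slope_neg (a : nat -> R) (i : nat) : Defs.Delta a i < 0 -> unit_slope a i = -1.
Proof.
  intros Hneg; unfold unit_slope, weight.
  destruct (Req_EM_T (Defs.Delta a i) 0); [lra|].
  rewrite Rabs_left by lra; field; lra.
Qed.

Lemma unit_slope_zero (a : nat -> R) (i : nat) : Defs.Delta a i = 0 -> unit_slope a i = 0.
Proof. intros Hzero; unfold unit_slope; rewrite Hzero; unfold Rdiv; ring. Qed.

Lemma unit_slope_pos (a : nat -> R) (i : nat) : 0 < Defs.Delta a i -> unit_slope a i = 1.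
Proof.
  intros Hpos; unfold unit_slope, weight.
  destruct (Req_EM_T (Defs.Delta a i) 0); [lra|].
  rewrite Rabs_right by lra; field; lra.
Qed.

Lemma unit_slope_bounds (a : nat -> R) (i : nat) : -1 <= unit_slope a i <= 1.
Proof.
  destruct (Rtotal_order (Defs.Delta a i) 0) as [H | [H | H]].
  - rewrite unit_slope_neg by exact H; lra.
  - rewrite unit_slope_zero by exact H; lra.
  - rewrite unit_slope_pos by exact H; lra.
Qed.

Lemma V_shaped_unit_slope_mono (n : nat) (a : nat -> R) :
  strictly_V_shaped n a ->
  forall i, (1 <= i)%nat -> (S i < n)%nat -> unit_slope a i <= unit_slope a (S i).
Proof.
  intros [m [M [Hm1 [HmM [HMn [Hdec [Hconst Hinc]]]]]]] i Hi1 Hin.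
  assert (Hlo := unit_slope_bounds a (S i)).
  assert (Hhi := unit_slope_bounds a i).
  destruct (Nat.lt_ge_cases i m) as [Him | Hmi].
  - (* decreasing part: the left slope is -1 *)
    rewrite unit_slope_neg; [lra|].
    specialize (Hdec i Hi1 Him); unfold Defs.Delta; lra.
  - destruct (Nat.lt_ge_cases (S i) M) as [HiM | HMi].
    +
      assert (Hflat : forall k, (m <= k)%nat -> (k < M)%nat -> Defs.Delta a k = 0).
      { intros k Hk1 Hk2; unfold Defs.Delta; rewrite (Hconst k Hk1 Hk2); ring. }
      rewrite (unit_slope_zero a i), (unit_slope_zero a (S i)) by (apply Hflat; lia).
      lra.
    + (* increasing part: the right slope is 1 *)
      rewrite (unit_slope_pos a (S i)); [lra|].
      specialize (Hinc (S i) HMi Hin); unfold Defs.Delta; lra.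
Qed.

Fixpoint cumul (a : nat -> R) (k : nat) : R :=
  match k with
  | O => 0
  | S k' => cumul a k' + weight a k'
  end.

Lemma Delta_cumul (a : nat -> R) (i : nat) : Defs.Delta (cumul a) i = weight a i.
Proof. unfold Defs.Delta; simpl; ring. Qed.

Lemma cumul_lt (a : nat -> R) (i j : nat) : (i < j)%nat -> cumul a i < cumul a j.
Proof.
  induction 1 as [| j Hij IH]; simpl.
  - pose proof (weight_pos a i); lra.
  - pose proof (weight_pos a j); lra.
Qed.

Lemma in_T_of_proportional_steps (n : nat) (a t w : nat -> R) (c : R) :
  0 < c -> (forall i, 0 < w i) -> (forall i, Defs.Delta t i = c * w i) ->
  (forall i, (1 <= i)%nat -> (S i < n)%nat ->
     Defs.Delta a i / w i <= Defs.Delta a (S i) / w (S i)) ->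
  in_T n a t.
Proof.
  intros Hc Hw Ht Hmono; split.
  - intros i _ _.
    assert (Hstep : 0 < Defs.Delta t i) by (rewrite Ht; now apply Rmult_lt_0_compat).
    unfold Defs.Delta in Hstep; lra.
  - intros i Hi1 Hin.
    assert (Hscale : forall k, Defs.Delta a k / Defs.Delta t k = / c * (Defs.Delta a k / w k)).
    { intros k; rewrite Ht; specialize (Hw k); field; lra. }
    rewrite !Hscale.
    apply Rmult_le_compat_l; [left; now apply Rinv_0_lt_compat|].
    now apply Hmono.
Qed.

Theorem theorem2p3 (n : nat) (a : nat -> R) (alpha beta : R) :
  (2 <= n)%nat -> strictly_V_shaped n a -> alpha < beta ->
  exists t : nat -> R, t 1%nat = alpha /\ t n = beta /\ in_T n a t.
Proof.
  intros Hn HV Hab.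
  assert (Hlen : cumul a 1 < cumul a n) by (apply cumul_lt; lia).
  set (c := (beta - alpha) / (cumul a n - cumul a 1)).
  assert (Hc : 0 < c) by (unfold c; apply Rdiv_lt_0_compat; lra).
  exists (fun i => alpha + c * (cumul a i - cumul a 1)).
  split; [ring|]; split; [unfold c; field; lra|].
  apply (in_T_of_proportional_steps n a _ (weight a) c Hc (weight_pos a)).
  - intros i; rewrite <- Delta_cumul; unfold Defs.Delta; ring.
  - exact (V_shaped_unit_slope_mono n a HV).
Qed.
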